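(* For every integer $S\ge1$, with $R=2S+1$, one has $\Vert T_R\Vert^2<\pi^2-\dfrac{6}{S+1}$. Moreover, for every integer $R\ge1$, $\pi-\Vert T_R\Vert\ge\dfrac{\pi}{2R}$.
   Context: $T_R$ is the $R\times R$ matrix with $(T_R)_{m,n}=0$ if $m=n$ and $(T_R)_{m,n}=\frac{1}{m-n}$ if $m\ne n$, $1\le m,n\le R$. $\Vert\cdot\Vert$ is the operator norm induced by the Euclidean norm. *)

From Stdlib Require Import Reals ClassicalEpsilon.
Open Scope R_scope.

Fixpoint fsum (n : nat) (f : nat -> R) : R :=
  match n with
  | O => 0
  | S k => fsum k f + f k
  end.

(* Vectors in R^R are functions nat -> R, coordinate i (0 <= i < R)
   standing for the paper's index m = i+1.  Since (i+1)-(j+1) = i-j, the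
   entries of T_R are: 0 on the diagonal, 1/(i-j) off the diagonal. *)
Definition T_entry (i j : nat) : R :=
  if Nat.eq_dec i j then 0 else / (INR i - INR j).

Definition applyT (Rd : nat) (x : nat -> R) (i : nat) : R :=
  fsum Rd (fun j => T_entry i j * x j).

Definition enorm (Rd : nat) (x : nat -> R) : R :=
  sqrt (fsum Rd (fun i => x i ^ 2)).

Definition opnorm_set (Rd : nat) : R -> Prop :=
  fun y => exists x : nat -> R, enorm Rd x = 1 /\ y = enorm Rd (applyT Rd x).

Definition opnormT (Rd : nat) : R :=
  epsilon (inhabits 0) (fun N => is_lub (opnorm_set Rd) N).

From Stdlib Require Import Reals Lra Lia Arith ClassicalEpsilon.
From Coquelicot Require Import Coquelicot.
Open Scope R_scope.

(* For coefficient vectors u, v in R^R consider the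
   trigonometric polynomial
     f(t) = |sum_j (u_j + i v_j) e^(i j t)|^2
          = sum_(j,k) A_jk cos((j-k) t) + B_jk sin((j-k) t),
   where A_jk = u_j u_k + v_j v_k and B_jk = u_j v_k - v_j u_k.  Then
   (1) 0 <= f <= R N by Cauchy-Schwarz, where N = |u|^2 + |v|^2;
   (2) int_0^(2pi) f = 2 pi N and int_0^(2pi) t f(t) dt = 2 pi^2 N - 4 pi <u, T v>,
       because int_0^(2pi) t sin(n t) dt = -2 pi / n for every integer n <> 0.
   Splitting int_0^(2pi) (t - a) f(t) dt at a = 2 pi / R and bounding f by R N
   on [0, a] gives 2 <u, T v> <= (pi - pi/R) N.  Choosing u = T x and v = l x
   and optimizing in l yields |T x| <= (pi - pi/R) |x|, i.e.
   ||T_R|| <= pi - pi/R, from which both claims follow by elementary estimates.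
   No integral is ever formed: each one is given by an explicit primitive, and
   the inequality between integrals comes from the mean value theorem. *)

Lemma fsum_ext n f g :
  (forall i, (i < n)%nat -> f i = g i) -> fsum n f = fsum n g.
Proof.
  induction n as [|n IH]; intros H; simpl; [reflexivity|].
  rewrite IH by (intros; apply H; lia). rewrite H by lia. reflexivity.
Qed.

Lemma fsum_plus n f g : fsum n (fun i => f i + g i) = fsum n f + fsum n g.
Proof. induction n as [|n IH]; simpl; [ring|]. rewrite IH; ring. Qed.

Lemma fsum_minus n f g : fsum n (fun i => f i - g i) = fsum n f - fsum n g.
Proof. induction n as [|n IH]; simpl; [ring|]. rewrite IH; ring. Qed.

Lemma fsum_scal n c f : fsum n (fun i => c * f i) = c * fsum n f.
Proof. induction n as [|n IH]; simpl; [ring|]. rewrite IH; ring. Qed.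

Lemma fsum_const n c : fsum n (fun _ => c) = INR n * c.
Proof. induction n as [|n IH]; simpl fsum; [simpl; ring|]. rewrite IH, S_INR; ring. Qed.

Lemma fsum_mul n m f g :
  fsum n f * fsum m g = fsum n (fun j => fsum m (fun k => f j * g k)).
Proof.
  induction n as [|n IH]; simpl; [ring|].
  rewrite <- IH, Rmult_plus_distr_r, <- (fsum_scal m (f n)). reflexivity.
Qed.

Lemma fsum_swap n m h :
  fsum n (fun j => fsum m (fun k => h j k)) = fsum m (fun k => fsum n (fun j => h j k)).
Proof.
  induction n as [|n IH]; simpl.
  - rewrite fsum_const; ring.
  - rewrite IH, <- fsum_plus. reflexivity.
Qed.

Lemma fsum_nonneg n f : (forall i, (i < n)%nat -> 0 <= f i) -> 0 <= fsum n f.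
Proof.
  induction n as [|n IH]; intros H; simpl; [lra|].
  assert (0 <= f n) by (apply H; lia).
  assert (0 <= fsum n f) by (apply IH; intros; apply H; lia). lra.
Qed.

Definition kron (j k : nat) : R := if Nat.eq_dec j k then 1 else 0.

Lemma fsum_kron n j g :
  fsum n (fun k => g k * kron j k) = if lt_dec j n then g j else 0.
Proof.
  unfold kron. induction n as [|n IH]; simpl.
  - destruct (lt_dec j 0); [lia|reflexivity].
  - rewrite IH. destruct (Nat.eq_dec j n) as [->|Hn].
    + destruct (lt_dec n n); [lia|]. destruct (lt_dec n (S n)); [ring|lia].
    + destruct (lt_dec j n), (lt_dec j (S n)); try lia; ring.
Qed.

(* Cauchy-Schwarz, from 2 (n sum f^2 - (sum f)^2) = sum_(i,j) (f i - f j)^2. *)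
Lemma fsum_sq_le n f : (fsum n f) ^ 2 <= INR n * fsum n (fun i => f i ^ 2).
Proof.
  assert (Hcross : (fsum n f) ^ 2 = fsum n (fun i => fsum n (fun j => f i * f j))).
  { rewrite <- fsum_mul. ring. }
  assert (Hrow : INR n * fsum n (fun i => f i ^ 2) = fsum n (fun i => fsum n (fun j => f i ^ 2))).
  { rewrite <- fsum_scal. apply fsum_ext; intros. rewrite fsum_const; ring. }
  assert (Hcol : INR n * fsum n (fun i => f i ^ 2) = fsum n (fun i => fsum n (fun j => f j ^ 2))).
  { rewrite fsum_const. reflexivity. }
  assert (Hsquares : 2 * (INR n * fsum n (fun i => f i ^ 2) - fsum n f ^ 2)
                     = fsum n (fun i => fsum n (fun j => (f i - f j) ^ 2))).
  { replace (2 * (INR n * fsum n (fun i => f i ^ 2) - fsum n f ^ 2)) with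
      (INR n * fsum n (fun i => f i ^ 2) + INR n * fsum n (fun i => f i ^ 2)
       - 2 * fsum n f ^ 2) by ring.
    rewrite Hrow at 1. rewrite Hcol, Hcross, <- fsum_plus, <- fsum_scal, <- fsum_minus.
    apply fsum_ext; intros i _.
    rewrite <- fsum_plus, <- fsum_scal, <- fsum_minus. apply fsum_ext; intros; ring. }
  assert (0 <= fsum n (fun i => fsum n (fun j => (f i - f j) ^ 2))).
  { apply fsum_nonneg; intros; apply fsum_nonneg; intros; apply pow2_ge_0. }
  lra.
Qed.

(** * The trigonometric polynomial f and its pointwise bounds *)

Definition freq (j k : nat) : R := INR j - INR k.
Definition cos_coef (u v : nat -> R) j k := u j * u k + v j * v k.
Definition sin_coef (u v : nat -> R) j k := u j * v k - v j * u k.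
Definition trig_term u v j k t :=
  cos_coef u v j k * cos (freq j k * t) + sin_coef u v j k * sin (freq j k * t).
Definition trig_sq (Rd : nat) u v t :=
  fsum Rd (fun j => fsum Rd (fun k => trig_term u v j k t)).

(* Real and imaginary parts of (u_j + i v_j) e^(i j t). *)
Definition re_part (u v : nat -> R) t j := u j * cos (INR j * t) - v j * sin (INR j * t).
Definition im_part (u v : nat -> R) t j := u j * sin (INR j * t) + v j * cos (INR j * t).

Definition sqnorm2 (Rd : nat) (u v : nat -> R) := fsum Rd (fun j => u j ^ 2 + v j ^ 2).
Definition bilinT (Rd : nat) (u v : nat -> R) := fsum Rd (fun j => u j * applyT Rd v j).

Lemma trig_sq_modulus Rd u v t :
  trig_sq Rd u v t = (fsum Rd (re_part u v t)) ^ 2 + (fsum Rd (im_part u v t)) ^ 2.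
Proof.
  rewrite <- !Rsqr_pow2. unfold Rsqr. rewrite !fsum_mul, <- fsum_plus.
  apply fsum_ext; intros j _. rewrite <- fsum_plus. apply fsum_ext; intros k _.
  unfold trig_term, re_part, im_part, cos_coef, sin_coef, freq.
  replace ((INR j - INR k) * t) with (INR j * t - INR k * t) by ring.
  rewrite cos_minus, sin_minus. ring.
Qed.

Lemma trig_sq_bounds Rd u v t :
  0 <= trig_sq Rd u v t <= INR Rd * sqnorm2 Rd u v.
Proof.
  rewrite trig_sq_modulus. split; [nra|].
  assert (Hsplit : sqnorm2 Rd u v = fsum Rd (fun j => re_part u v t j ^ 2)
                                    + fsum Rd (fun j => im_part u v t j ^ 2)).
  { rewrite <- fsum_plus. apply fsum_ext; intros j _. unfold re_part, im_part.
    pose proof (sin2_cos2 (INR j * t)). unfold Rsqr in *. nra. }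
  rewrite Hsplit.
  pose proof (fsum_sq_le Rd (re_part u v t)). pose proof (fsum_sq_le Rd (im_part u v t)).
  lra.
Qed.

(** * Primitives of f and of t f(t) *)

Lemma freq_neq0 j k : j <> k -> freq j k <> 0.
Proof. intros H E. apply H, INR_eq. unfold freq in E. lra. Qed.

Lemma freq_diag j : freq j j = 0.
Proof. unfold freq; ring. Qed.

Definition prim0 u v j k t :=
  if Nat.eq_dec j k then cos_coef u v j k * t
  else (cos_coef u v j k * sin (freq j k * t) - sin_coef u v j k * cos (freq j k * t))
       / freq j k.

Definition prim1 u v j k t :=
  if Nat.eq_dec j k then cos_coef u v j k * (t ^ 2 / 2)
  else cos_coef u v j k * (t * sin (freq j k * t) / freq j k + cos (freq j k * t) / freq j k ^ 2)
     + sin_coef u v j k * (- t * cos (freq j k * t) / freq j k + sin (freq j k * t) / freq j k ^ 2).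

Lemma prim0_derive u v j k t : is_derive (prim0 u v j k) t (trig_term u v j k t).
Proof.
  unfold prim0, trig_term. destruct (Nat.eq_dec j k) as [<-|Hjk].
  - rewrite freq_diag, Rmult_0_l, cos_0, sin_0. auto_derive; auto; ring.
  - pose proof (freq_neq0 j k Hjk). auto_derive; auto. field; auto.
Qed.

Lemma prim1_derive u v j k t : is_derive (prim1 u v j k) t (t * trig_term u v j k t).
Proof.
  unfold prim1, trig_term. destruct (Nat.eq_dec j k) as [<-|Hjk].
  - rewrite freq_diag, Rmult_0_l, cos_0, sin_0. auto_derive; auto; field.
  - pose proof (freq_neq0 j k Hjk). auto_derive; repeat split; auto. field; auto.
Qed.

Lemma freq_full_period j k : sin (freq j k * (2 * PI)) = 0 /\ cos (freq j k * (2 * PI)) = 1.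
Proof.
  unfold freq.
  replace ((INR j - INR k) * (2 * PI)) with ((0 + 2 * INR j * PI) - (0 + 2 * INR k * PI)) by ring.
  rewrite sin_minus, cos_minus, !sin_period, !cos_period, sin_0, cos_0. split; ring.
Qed.

Lemma prim0_increment u v j k :
  prim0 u v j k (2 * PI) - prim0 u v j k 0 = 2 * PI * cos_coef u v j k * kron j k.
Proof.
  unfold prim0, kron. destruct (Nat.eq_dec j k) as [<-|Hjk]; [ring|].
  destruct (freq_full_period j k) as [-> ->].
  rewrite Rmult_0_r with (r := freq j k), sin_0, cos_0. pose proof (freq_neq0 j k Hjk). field. auto.
Qed.

Lemma prim1_increment u v j k :
  prim1 u v j k (2 * PI) - prim1 u v j k 0 =
  2 * PI ^ 2 * cos_coef u v j k * kron j k - 2 * PI * sin_coef u v j k * T_entry j k.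
Proof.
  unfold prim1, kron, T_entry. destruct (Nat.eq_dec j k) as [<-|Hjk]; [field|].
  destruct (freq_full_period j k) as [-> ->].
  rewrite Rmult_0_r with (r := freq j k), sin_0, cos_0. pose proof (freq_neq0 j k Hjk). unfold freq in *. field; auto.
Qed.

Definition Prim0 (Rd : nat) u v t := fsum Rd (fun j => fsum Rd (fun k => prim0 u v j k t)).
Definition Prim1 (Rd : nat) u v t := fsum Rd (fun j => fsum Rd (fun k => prim1 u v j k t)).

Lemma is_derive_fsum n (g : nat -> R -> R) (g' : nat -> R) t :
  (forall i, is_derive (g i) t (g' i)) ->
  is_derive (fun s => fsum n (fun i => g i s)) t (fsum n g').
Proof.
  intros H. induction n as [|n IH]; simpl.
  - apply is_derive_Reals, derivable_pt_lim_const.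
  - apply (is_derive_plus (fun s => fsum n (fun i => g i s)) (g n)); auto.
Qed.

Lemma Prim0_derive Rd u v t : is_derive (Prim0 Rd u v) t (trig_sq Rd u v t).
Proof.
  apply (is_derive_fsum Rd (fun j s => fsum Rd (fun k => prim0 u v j k s))); intros j.
  apply (is_derive_fsum Rd (prim0 u v j)); intros k. apply prim0_derive.
Qed.

Lemma Prim1_derive Rd u v t : is_derive (Prim1 Rd u v) t (t * trig_sq Rd u v t).
Proof.
  unfold trig_sq. rewrite <- fsum_scal.
  erewrite fsum_ext by (intros; symmetry; apply fsum_scal).
  apply (is_derive_fsum Rd (fun j s => fsum Rd (fun k => prim1 u v j k s))); intros j.
  apply (is_derive_fsum Rd (prim1 u v j)); intros k. apply prim1_derive.
Qed.

Lemma fsum_cos_coef_diag Rd u v c :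
  fsum Rd (fun j => fsum Rd (fun k => c * cos_coef u v j k * kron j k)) = c * sqnorm2 Rd u v.
Proof.
  unfold sqnorm2. rewrite <- fsum_scal. apply fsum_ext; intros j Hj.
  rewrite (fsum_kron Rd j (fun k => c * cos_coef u v j k)).
  destruct (lt_dec j Rd); [|lia]. unfold cos_coef. ring.
Qed.

Lemma T_entry_antisym j k : T_entry k j = - T_entry j k.
Proof.
  unfold T_entry. destruct (Nat.eq_dec k j), (Nat.eq_dec j k); try lia; try ring.
  assert (INR j - INR k <> 0) by (intro E; apply n0, INR_eq; lra).
  field. split; lra.
Qed.

(* By antisymmetry of T, the sine coefficients pair with T into 2 <u, T v>. *)
Lemma fsum_sin_coef_T Rd u v :
  fsum Rd (fun j => fsum Rd (fun k => sin_coef u v j k * T_entry j k)) = 2 * bilinT Rd u v.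
Proof.
  assert (Hswap : fsum Rd (fun j => fsum Rd (fun k => v j * u k * T_entry j k))
                  = -1 * fsum Rd (fun j => fsum Rd (fun k => u j * v k * T_entry j k))).
  { rewrite fsum_swap, <- fsum_scal. apply fsum_ext; intros j _.
    rewrite <- fsum_scal. apply fsum_ext; intros k _. rewrite T_entry_antisym; ring. }
  transitivity (fsum Rd (fun j => fsum Rd (fun k => u j * v k * T_entry j k))
                - fsum Rd (fun j => fsum Rd (fun k => v j * u k * T_entry j k))).
  { rewrite <- fsum_minus. apply fsum_ext; intros j _.
    rewrite <- fsum_minus. apply fsum_ext; intros k _. unfold sin_coef. ring. }
  rewrite Hswap. unfold bilinT, applyT.
  replace (_ - -1 * _) with (2 * fsum Rd (fun j => fsum Rd (fun k => u j * v k * T_entry j k))) by ring.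
  f_equal. apply fsum_ext; intros j _. rewrite <- fsum_scal. apply fsum_ext; intros; ring.
Qed.

Lemma Prim0_increment Rd u v :
  Prim0 Rd u v (2 * PI) - Prim0 Rd u v 0 = 2 * PI * sqnorm2 Rd u v.
Proof.
  unfold Prim0. rewrite <- fsum_minus, <- fsum_cos_coef_diag. apply fsum_ext; intros j _.
  rewrite <- fsum_minus. apply fsum_ext; intros k _. apply prim0_increment.
Qed.

Lemma Prim1_increment Rd u v :
  Prim1 Rd u v (2 * PI) - Prim1 Rd u v 0 = 2 * PI ^ 2 * sqnorm2 Rd u v - 4 * PI * bilinT Rd u v.
Proof.
  replace (4 * PI * bilinT Rd u v) with (2 * PI * (2 * bilinT Rd u v)) by ring.
  rewrite <- fsum_sin_coef_T, <- fsum_cos_coef_diag, <- fsum_scal, <- fsum_minus.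
  unfold Prim1. rewrite <- fsum_minus. apply fsum_ext; intros j _.
  rewrite <- fsum_scal, <- !fsum_minus. apply fsum_ext; intros k _. rewrite prim1_increment. ring.
Qed.

(** * The bilinear bound 2 <u, T v> <= (pi - pi/R) N *)

Lemma increment_nonneg (H h : R -> R) p q :
  p <= q -> (forall t, is_derive H t (h t)) ->
  (forall t, p <= t <= q -> 0 <= h t) -> H p <= H q.
Proof.
  intros Hpq Hd Hpos. destruct (Req_dec p q) as [<-|Hne]; [lra|].
  destruct (MVT_cor2 H h p q) as [c [Hc Hcpq]]; [lra| |].
  { intros c _. apply is_derive_Reals, Hd. }
  assert (0 <= h c) by (apply Hpos; lra). nra.
Qed.

(* If 0 <= f <= M and 0 <= a <= 2 pi, then int_0^(2pi) (t - a) f(t) dt >= -M a^2/2: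
   on [a, 2 pi] the integrand is nonnegative, on [0, a] it is at least (t - a) M. *)
Lemma first_moment_lower_bound Rd u v a M :
  0 <= a <= 2 * PI -> (forall t, trig_sq Rd u v t <= M) ->
  - (M * a ^ 2 / 2) <= (Prim1 Rd u v (2 * PI) - a * Prim0 Rd u v (2 * PI))
                       - (Prim1 Rd u v 0 - a * Prim0 Rd u v 0).
Proof.
  intros Ha HM.
  set (Psi t := Prim1 Rd u v t - a * Prim0 Rd u v t).
  assert (HPsi : forall t, is_derive Psi t ((t - a) * trig_sq Rd u v t)).
  { intros t. replace ((t - a) * trig_sq Rd u v t)
      with (t * trig_sq Rd u v t - a * trig_sq Rd u v t) by ring.
    apply (is_derive_minus (Prim1 Rd u v) (fun s => a * Prim0 Rd u v s)).
    - apply Prim1_derive.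
    - apply (is_derive_scal (Prim0 Rd u v)), Prim0_derive. }
  assert (Hinit : Psi 0 + M * (a * 0 - 0 ^ 2 / 2) <= Psi a + M * (a * a - a ^ 2 / 2)).
  { apply (increment_nonneg (fun t => Psi t + M * (a * t - t ^ 2 / 2))
             (fun t => (a - t) * (M - trig_sq Rd u v t))); [lra| |].
    - intros t.
      replace ((a - t) * (M - trig_sq Rd u v t))
        with ((t - a) * trig_sq Rd u v t + M * (a * 1 - (INR 2 * t ^ 1 * 1) / 2))
        by (simpl; field).
      apply (is_derive_plus Psi (fun s => M * (a * s - s ^ 2 / 2))); [apply HPsi|].
      auto_derive; auto. simpl. field.
    - intros t Ht. specialize (HM t). apply Rmult_le_pos; lra. }
  assert (Hrest : Psi a <= Psi (2 * PI)).
  { apply (increment_nonneg Psi (fun t => (t - a) * trig_sq Rd u v t)); [lra|apply HPsi|].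
    intros t Ht. pose proof (trig_sq_bounds Rd u v t). apply Rmult_le_pos; lra. }
  unfold Psi in *. replace (a * 0 - 0 ^ 2 / 2) with 0 in Hinit by field.
  replace (a * a - a ^ 2 / 2) with (a ^ 2 / 2) in Hinit by field.
  lra.
Qed.

(* The key inequality, with a = 2 pi / R and M = R N. *)
Lemma bilinT_bound Rd u v :
  (1 <= Rd)%nat -> 2 * bilinT Rd u v <= (PI - PI / INR Rd) * sqnorm2 Rd u v.
Proof.
  intros HRd.
  assert (HR : 1 <= INR Rd) by (apply (le_INR 1); lia).
  pose proof PI_RGT_0 as Hpi.
  set (N := sqnorm2 Rd u v).
  assert (Ha : 0 <= 2 * PI / INR Rd <= 2 * PI).
  { split; [apply Rlt_le, Rdiv_lt_0_compat; lra|].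
    apply (Rmult_le_reg_r (INR Rd)); [lra|]. field_simplify; [nra|lra]. }
  pose proof (first_moment_lower_bound Rd u v (2 * PI / INR Rd) (INR Rd * N) Ha
                (fun t => proj2 (trig_sq_bounds Rd u v t))) as Hmoment.
  pose proof (Prim0_increment Rd u v) as H0. pose proof (Prim1_increment Rd u v) as H1.
  fold N in H0, H1.
  assert (Hsum : 0 <= 2 * PI * ((PI - PI / INR Rd) * N - 2 * bilinT Rd u v)).
  { replace (2 * PI * ((PI - PI / INR Rd) * N - 2 * bilinT Rd u v))
      with ((Prim1 Rd u v (2 * PI) - Prim1 Rd u v 0)
            - 2 * PI / INR Rd * (Prim0 Rd u v (2 * PI) - Prim0 Rd u v 0)
            + INR Rd * N * (2 * PI / INR Rd) ^ 2 / 2)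
      by (rewrite H0, H1; field; lra).
    lra. }
  apply Rmult_le_reg_l with (2 * PI); lra.
Qed.

(** * The operator-norm bound ||T_R|| <= pi - pi/R *)

(* If 2 l a <= c (a + l^2 b) for all real l, then a <= c^2 b (take l = c). *)
Lemma quadratic_bound a b c :
  0 <= a -> 0 <= c -> (forall l, 2 * (l * a) <= c * (a + l ^ 2 * b)) -> a <= c ^ 2 * b.
Proof.
  intros Ha Hc Hl. destruct (Req_dec c 0) as [->|Hc0].
  - specialize (Hl 1). nra.
  - specialize (Hl c). apply (Rmult_le_reg_l c); nra.
Qed.

Lemma PI_div_le Rd : (1 <= Rd)%nat -> 0 < PI / INR Rd <= PI.
Proof.
  intros HRd. assert (HR : 1 <= INR Rd) by (apply (le_INR 1); lia).
  pose proof PI_RGT_0. split; [apply Rdiv_lt_0_compat; lra|].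
  apply (Rmult_le_reg_r (INR Rd)); [lra|]. field_simplify; [nra|lra].
Qed.

(* |T x|^2 <= (pi - pi/R)^2 |x|^2, from the bilinear bound with u = T x, v = l x. *)
Lemma applyT_sq_bound Rd x : (1 <= Rd)%nat ->
  fsum Rd (fun i => applyT Rd x i ^ 2) <= (PI - PI / INR Rd) ^ 2 * fsum Rd (fun i => x i ^ 2).
Proof.
  intros HRd. pose proof (PI_div_le Rd HRd).
  apply quadratic_bound; [apply fsum_nonneg; intros; apply pow2_ge_0|lra|].
  intros l. pose proof (bilinT_bound Rd (applyT Rd x) (fun k => l * x k) HRd) as Hb.
  assert (Hlin : forall j, applyT Rd (fun k => l * x k) j = l * applyT Rd x j).
  { intros j. unfold applyT. rewrite <- fsum_scal. apply fsum_ext; intros; ring. }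
  replace (bilinT Rd (applyT Rd x) (fun k => l * x k))
    with (l * fsum Rd (fun i => applyT Rd x i ^ 2)) in Hb.
  2:{ unfold bilinT. rewrite <- fsum_scal. apply fsum_ext; intros j _. rewrite Hlin. ring. }
  replace (sqnorm2 Rd (applyT Rd x) (fun k => l * x k))
    with (fsum Rd (fun i => applyT Rd x i ^ 2) + l ^ 2 * fsum Rd (fun i => x i ^ 2)) in Hb.
  2:{ unfold sqnorm2. rewrite <- fsum_scal, <- fsum_plus. apply fsum_ext; intros; ring. }
  exact Hb.
Qed.

(* First basis vector, witnessing that the set defining the operator norm is nonempty. *)
Definition e0 (i : nat) : R := if Nat.eq_dec i 0 then 1 else 0.

Lemma enorm_e0 n : enorm (S n) e0 = 1.
Proof.
  unfold enorm. rewrite <- sqrt_1. f_equal.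
  induction n as [|n IH]; [simpl; unfold e0; simpl; ring|].
  change (fsum (S (S n)) (fun i => e0 i ^ 2)) with (fsum (S n) (fun i => e0 i ^ 2) + e0 (S n) ^ 2).
  rewrite IH. unfold e0. simpl. ring.
Qed.

Lemma opnormT_le Rd c : (1 <= Rd)%nat ->
  (forall x, enorm Rd x = 1 -> enorm Rd (applyT Rd x) <= c) -> 0 <= opnormT Rd <= c.
Proof.
  intros HRd Hc.
  assert (Hub : is_upper_bound (opnorm_set Rd) c) by (intros y [x [Hx ->]]; auto).
  assert (Hin : opnorm_set Rd (enorm Rd (applyT Rd e0))).
  { exists e0. split; [|reflexivity]. destruct Rd as [|n]; [lia|apply enorm_e0]. }
  assert (Hlub : is_lub (opnorm_set Rd) (opnormT Rd)).
  { apply (epsilon_spec (inhabits 0) (fun N => is_lub (opnorm_set Rd) N)).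
    destruct (completeness (opnorm_set Rd)) as [m Hm]; [exists c; exact Hub|eexists; exact Hin|].
    exists m; exact Hm. }
  destruct Hlub as [Hl1 Hl2]. split.
  - apply Rle_trans with (enorm Rd (applyT Rd e0)); [apply sqrt_pos|apply Hl1, Hin].
  - apply Hl2, Hub.
Qed.

Lemma opnormT_bound Rd : (1 <= Rd)%nat -> 0 <= opnormT Rd <= PI - PI / INR Rd.
Proof.
  intros HRd. apply opnormT_le; [exact HRd|]. intros x Hx.
  pose proof (PI_div_le Rd HRd) as Hc.
  assert (Hx2 : fsum Rd (fun i => x i ^ 2) = 1).
  { unfold enorm in Hx. rewrite <- (sqrt_sqrt _ (fsum_nonneg _ _ (fun i _ => pow2_ge_0 (x i)))).
    rewrite Hx. ring. }
  pose proof (applyT_sq_bound Rd x HRd) as Hb. rewrite Hx2, Rmult_1_r in Hb.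
  unfold enorm. rewrite <- (sqrt_pow2 (PI - PI / INR Rd)) by lra.
  apply sqrt_le_1_alt, Hb.
Qed.

Lemma PI_gt_2_8 : 2.8 < PI.
Proof.
  destruct (PI_ineq 1) as [H _]. unfold tg_alt, PI_tg in H. simpl in H. lra.
Qed.

(* For R = 2S+1: ||T_R||^2 <= (2 pi S/(2S+1))^2 < pi^2 - 6/(S+1); the last step
   amounts to 6 (2S+1)^2 < pi^2 (4S+1)(S+1), true since pi^2 > 7.84. *)
Lemma odd_size_claim S : (1 <= S)%nat ->
  opnormT (2 * S + 1) ^ 2 < PI ^ 2 - 6 / (INR S + 1).
Proof.
  intros HS. destruct (opnormT_bound (2 * S + 1) ltac:(lia)) as [H0 H1].
  rewrite plus_INR, mult_INR in H1. simpl (INR 2) in H1. simpl (INR 1) in H1.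
  assert (Hr : 1 <= INR S) by (apply (le_INR 1); lia).
  pose proof PI_gt_2_8 as Hpi.
  set (r := INR S) in *. set (L := opnormT (2 * S + 1)) in *.
  replace (PI - PI / ((1 + 1) * r + 1)) with (PI * (2 * r) / (2 * r + 1)) in H1 by (field; lra).
  assert (HL2 : L ^ 2 <= (PI * (2 * r) / (2 * r + 1)) ^ 2) by (apply pow_incr; lra).
  assert (Hnum : 6 * (2 * r + 1) ^ 2 < PI ^ 2 * (4 * r + 1) * (r + 1)).
  { assert (7.84 < PI ^ 2) by nra.
    assert (7.84 * ((4 * r + 1) * (r + 1)) < PI ^ 2 * ((4 * r + 1) * (r + 1)))
      by (apply Rmult_lt_compat_r; nra).
    nra. }
  assert (Hgap : 0 < PI ^ 2 - 6 / (r + 1) - (PI * (2 * r) / (2 * r + 1)) ^ 2).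
  { replace (PI ^ 2 - 6 / (r + 1) - (PI * (2 * r) / (2 * r + 1)) ^ 2)
      with ((PI ^ 2 * (4 * r + 1) * (r + 1) - 6 * (2 * r + 1) ^ 2) / ((2 * r + 1) ^ 2 * (r + 1)))
      by (field; lra).
    apply Rdiv_lt_0_compat; [lra|]. apply Rmult_lt_0_compat; nra. }
  lra.
Qed.

Lemma distance_to_PI_claim Rd : (1 <= Rd)%nat -> PI - opnormT Rd >= PI / (2 * INR Rd).
Proof.
  intros HRd. destruct (opnormT_bound Rd HRd) as [_ H1].
  pose proof (PI_div_le Rd HRd) as Hc.
  assert (HR : 1 <= INR Rd) by (apply (le_INR 1); lia).
  replace (PI / (2 * INR Rd)) with ((PI / INR Rd) / 2) by (field; lra).
  lra.
Qed.

Theorem mainTheorem14 :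
  (forall S : nat, (1 <= S)%nat ->
     (opnormT (2 * S + 1)) ^ 2 < PI ^ 2 - 6 / (INR S + 1)) /\
  (forall Rd : nat, (1 <= Rd)%nat ->
     PI - opnormT Rd >= PI / (2 * INR Rd)).
Proof.
  split.
  - exact odd_size_claim.
  - exact distance_to_PI_claim.
Qed.
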